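(* Let $D>0$, $c_4>0$, $k>0$ and consider the system, for $x\in[0,D]$, $t\ge0$, $$\tilde v_t(x,t)-c_4\tilde v_x(x,t)=-k\tilde v(x,t),\qquad \tilde v_t(D,t)=-k\tilde v(D,t).$$ This system is $\mathscr L_p$, $p\in[1,\infty]$, convectively stable in the sense that for any $0\le x_2<x_1\le D$ such that $\tilde v(x_1,\cdot)\in\mathscr L_p$ and $\tilde v_x(x_1,\cdot)\in\mathscr L_p$, the following hold: $$\|\tilde v(x_2,\cdot)\|_{\mathscr L_p}<\|\tilde v(x_1,\cdot)\|_{\mathscr L_p},\qquad \|\tilde v_x(x_2,\cdot)\|_{\mathscr L_p}<\|\tilde v_x(x_1,\cdot)\|_{\mathscr L_p}.$$
   Context: For a signal $f$ on $[0,\infty)$, $\|f\|_{\mathscr L_p}=\left(\int_0^\infty|f(t)|^pdt\right)^{1/p}$ for $p<\infty$ and $\|f\|_{\mathscr L_\infty}=\sup_{t\ge0}|f(t)|$. The statement is understood in an input-output sense: $t\mapsto\tilde v(x_1,t)$ is regarded as the input signal and $\tilde v(x_2,\cdot)$ as the corresponding output of the transport equation with zero initial conditions (effect of initial data disregarded, i.e. $\tilde v(x_1,\theta)=0$ for $\theta<0$). Here $\tilde v$ is the deviation of traffic speed from equilibrium, and $x$ is the position along a freeway stretch of length $D$. *)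

From HB Require Import structures.
From mathcomp Require Import all_boot all_order all_algebra.
From mathcomp Require Import all_classical all_reals all_analysis.
Set Implicit Arguments. Unset Strict Implicit. Unset Printing Implicit Defensive.
Import Order.TTheory GRing.Theory Num.Theory.
Import numFieldNormedType.Exports.
Local Open Scope classical_set_scope.
Local Open Scope ring_scope.

Definition Lpnorm {R : realType} (p : \bar R) (f : R -> R) : \bar R :=
  match p with
  | p'%:E => ((\int[lebesgue_measure]_(t in `[0%R : R, +oo[%classic)
                 ((`|f t| `^ p')%:E)) `^ p'^-1)%E
  | +oo%E => ereal_sup [set (`|f t|)%:E | t in `[0%R, +oo[%classic]
  | -oo%E => 0%E
  end.

Definition in_Lp {R : realType} (p : \bar R) (f : R -> R) : Prop :=
  measurable_fun `[0%R : R, +oo[%classic f /\ (Lpnorm p f < +oo)%E.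

Definition dt {R : realType} (v : R -> R -> R) (x t : R) : R := derive1 (v x) t.
Definition dx {R : realType} (v : R -> R -> R) (x t : R) : R :=
  derive1 (fun y => v y t) x.

From HB Require Import structures.
From mathcomp Require Import all_boot all_order all_algebra.
From mathcomp Require Import all_classical all_reals all_analysis.
From mathcomp Require Import measurable_realfun ring lra.
Import Order.TTheory GRing.Theory Num.Theory.
Import numFieldNormedType.Exports.

Set Implicit Arguments.
Unset Strict Implicit.
Unset Printing Implicit Defensive.
Local Open Scope classical_set_scope.
Local Open Scope ring_scope.

(* Along a characteristic s |-> (x1 - c4 s, t + s) the quantity exp(k s) v is
   constant, so v(x2, .) is the damped delayed copy exp(-k S) v(x1, . - S) of
   the input, with S = (x1 - x2) / c4; through the equation, v_x(x2, .) is the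
   same transform of v_x(x1, .).  Both signals at x1 vanish before time 0, so
   by translation invariance of the Lebesgue measure the delay cannot increase
   an L_p norm, while the factor exp(-k S) < 1 makes the inequality strict. *)

Section translation_invariance.
Context {R : realType}.
Local Notation mu := (@lebesgue_measure R).

Lemma measurable_shift (x : R) : measurable_fun [set: R] (shift x).
Proof. by apply: measurable_funD => //; exact: measurable_cst. Qed.

Lemma lebesgue_measure_shift (x : R) (A : set R) : measurable A ->
  pushforward mu (shift x : _ -> measurableTypeR R) A = mu A.
Proof.
move=> mA; apply/esym/lebesgue_measure_unique => //=; first exact: measurable_shift.
move=> _ _ [[a b] _ <-].
rewrite /pushforward (_ : _ @^-1` _ = `]a - x, b - x]%classic); last first.
  by apply/seteqP; split => y; rewrite /= !in_itv /= ltrBlDr lerBrDr.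
rewrite !lebesgue_measure_itv /= !lte_fin ltrD2r.
by case: ifP => // _; rewrite -!EFinD opprB addrA subrK.
Qed.

Lemma ge0_integral_shift (x : R) (f : R -> \bar R) :
  measurable_fun [set: R] f -> (forall y, (0 <= f y)%E) ->
  (\int[mu]_y f (y + x)%R = \int[mu]_y f y)%E.
Proof.
move=> mf f0.
have := @ge0_integral_pushforward _ _ (measurableTypeR R) (measurableTypeR R) _
  (shift x) (measurable_shift x) mu
  setT f measurableT mf (fun y _ => f0 y).
rewrite preimage_setT => <-.
apply: eq_measure_integral => [|? A mA _]; first exact: measurable_shift.
exact: lebesgue_measure_shift.
Qed.
End translation_invariance.

Section delayed_signals.
Context {R : realType}.
Local Notation mu := (@lebesgue_measure R).

Definition causal (w : R -> R) := forall t, t < 0 -> w t = 0.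

Lemma notin_itv0y_lt0 (t : R) : t \notin `[0%R : R, +oo[%classic -> t < 0.
Proof. by rewrite notin_setE /= in_itv /= andbT => /negP; rewrite -ltNge. Qed.

Lemma causal_measurable_funT (w : R -> R) : causal w ->
  measurable_fun `[0%R : R, +oo[%classic w -> measurable_fun [set: R] w.
Proof.
move=> w0 mw; suff -> : w = w \_ `[0%R : R, +oo[%classic.
  exact/(measurable_restrictT _ _).1.
by apply/funext => t; rewrite patchE; case: ifPn => // /notin_itv0y_lt0/w0.
Qed.

Lemma ge0_integral_delay_le (S : R) (g : R -> \bar R) :
  measurable_fun [set: R] g -> (forall t, (0 <= g t)%E) ->
  (forall t, t < 0 -> g t = 0%E) ->
  (\int[mu]_(t in `[0%R : R, +oo[%classic) g (t - S)%R
   <= \int[mu]_(t in `[0%R : R, +oo[%classic) g t)%E.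
Proof.
move=> mg g0 gN.
have -> : (\int[mu]_(t in `[0%R : R, +oo[%classic) g t = \int[mu]_t g t)%E.
  rewrite integral_mkcond; apply: eq_integral => t _; rewrite patchE.
  by case: ifPn => // /notin_itv0y_lt0/gN.
rewrite -(ge0_integral_shift (- S)) //; apply: ge0_subset_integral => //.
exact: measurableT_comp mg (measurable_shift _).
Qed.

Lemma Lpnorm_scale_delay_le (a S : R) (p : \bar R) (w : R -> R) :
  0 <= a -> (0 < p)%E -> causal w -> measurable_fun `[0%R : R, +oo[%classic w ->
  (Lpnorm p (fun t => a * w (t - S))%R <= a%:E * Lpnorm p w)%E.
Proof.
move=> a0; case: p => [p||] //= p0 w0 mw; last first.
  have le_sup s : 0 <= s ->
      (`|w s|%:E <= ereal_sup [set `|w t|%:E | t in `[0%R : R, +oo[%classic])%E.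
    by move=> s0; apply: ereal_sup_ubound; exists s => //=; rewrite in_itv /= s0.
  apply: ub_ereal_sup => _ [t _ <-]; rewrite normrM ger0_norm // EFinM.
  apply: lee_wpmul2l; first by rewrite lee_fin.
  have [/le_sup //|/w0->] := leP 0 (t - S).
  by rewrite normr0 (le_trans _ (le_sup 0 _)) ?lee_fin.
rewrite lte_fin in p0.
have mwp : measurable_fun [set: R] (fun t => (`|w t| `^ p)%:E).
  apply/measurable_EFinP/(measurableT_comp (measurable_powR _)).
  by apply: measurableT_comp => //; exact: causal_measurable_funT.
under eq_integral => t _ do rewrite normrM powRM // ger0_norm // EFinM.
rewrite ge0_integralZl_EFin ?powR_ge0 //; last first.
  by apply: measurable_funTS; exact: measurableT_comp mwp (measurable_shift _).
have wp0 t : t < 0 -> (`|w t| `^ p)%:E = 0%E.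
  by move/w0->; rewrite normr0 powR0 ?gt_eqF.
have delay_le := ge0_integral_delay_le S mwp (fun t => powR_ge0 _ _) wp0.
set Iu := (\int[_]_(t in _) _)%E in delay_le *.
set Iw := (\int[_]_(t in _) _)%E in delay_le *.
have [Iu0 Iw0] : (0 <= Iu)%E /\ (0 <= Iw)%E.
  by split; apply: integral_ge0 => t _; rewrite lee_fin powR_ge0.
have ap0 : (0 <= (a `^ p)%:E)%E by rewrite lee_fin powR_ge0.
apply: (@le_trans _ _ (((a `^ p)%:E * Iw) `^ p^-1)%E).
  apply: gt0_ler_poweR; rewrite ?invr_ge0 ?(ltW p0) ?lee_wpmul2l //;
  by rewrite in_itv /= leey andbT mule_ge0.
by rewrite poweRM ?lee_fin ?powR_ge0 // poweR_EFin -powRrM mulfV ?gt_eqF ?powRr1.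
Qed.

Lemma Lpnorm_scale_delay_lt (a S : R) (p : \bar R) (w : R -> R) :
  0 < a < 1 -> (0 < p)%E -> causal w -> in_Lp p w -> (0 < Lpnorm p w)%E ->
  (Lpnorm p (fun t => a * w (t - S))%R < Lpnorm p w)%E.
Proof.
move=> /andP[a0 a1] p0 w0 [mw Nfin] N0.
apply: le_lt_trans (Lpnorm_scale_delay_le S (ltW a0) p0 w0 mw) _.
move: Nfin N0; case: (Lpnorm p w) => // N _.
by rewrite -EFinM !lte_fin => N0; rewrite gtr_pMl.
Qed.

End delayed_signals.

Lemma is_derive0_segment_eq {R : realType} (f : R -> R) (a b : R) : a <= b ->
  (forall s, a <= s <= b -> is_derive s 1 f 0) -> f b = f a.
Proof.
move=> ab f'0.
have f'0_in s : s \in `]a, b[ -> is_derive s 1 f ((fun=> 0) s).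
  by rewrite in_itv /= => /andP[a_s s_b]; apply: f'0; rewrite !ltW.
have cf : {within `[a, b], continuous f}.
  apply: continuous_in_subspaceT => s; rewrite inE /= in_itv /= => sab.
  by apply/differentiable_continuous/derivable1_diffP; have [] := f'0 s sab.
have [c _] := MVT_segment ab f'0_in cf.
by rewrite mul0r => /eqP; rewrite subr_eq0 => /eqP.
Qed.

Section partial_derivatives.
Context {R : realType}.
Variable v : R -> R -> R.
Let f (z : R * R) := v z.1 z.2.

Lemma is_derive_along (g1 g2 : R -> R) (s d1 d2 : R) :
  is_derive s 1 g1 d1 -> is_derive s 1 g2 d2 -> differentiable f (g1 s, g2 s) ->
  is_derive s 1 (fun s => v (g1 s) (g2 s)) ('d f (g1 s, g2 s) (d1, d2)).
Proof.
move=> [/derivable1_diffP dg1 <-] [/derivable1_diffP dg2 <-] df.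
have dg : differentiable (fun s => (g1 s, g2 s)) s by exact: differentiable_pair.
have dfg : differentiable (f \o (fun s => (g1 s, g2 s))) s.
  exact: differentiable_comp.
rewrite (_ : (fun s => _) = f \o (fun s => (g1 s, g2 s))) //.
apply: DeriveDef; first exact/derivable1_diffP.
by rewrite deriveE // diff_comp //= diff_pair //= -!deriveE.
Qed.

Lemma dxE (x t : R) : differentiable f (x, t) -> dx v x t = 'd f (x, t) (1, 0).
Proof.
move=> df; rewrite /dx derive1E.
by case: (is_derive_along (is_derive_id x 1) (is_derive_cst t x 1) df).
Qed.

Lemma dtE (x t : R) : differentiable f (x, t) -> dt v x t = 'd f (x, t) (0, 1).
Proof.
move=> df; rewrite /dt derive1E.
by case: (is_derive_along (is_derive_cst x t 1) (is_derive_id t 1) df).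
Qed.

Lemma is_derive_along_dxdt (g1 g2 : R -> R) (s d1 d2 : R) :
  is_derive s 1 g1 d1 -> is_derive s 1 g2 d2 -> differentiable f (g1 s, g2 s) ->
  is_derive s 1 (fun s => v (g1 s) (g2 s))
    (d1 * dx v (g1 s) (g2 s) + d2 * dt v (g1 s) (g2 s)).
Proof.
move=> dg1 dg2 df; rewrite dxE // dtE // -!linearZ -linearD /=.
suff -> : d1 *: ((1, 0) : R * R) + d2 *: (0, 1) = (d1, d2) by exact: is_derive_along.
by congr pair; rewrite /= scaler0 ?addr0 ?add0r; exact: mulr1.
Qed.

End partial_derivatives.

Section transport_equation.
Context {R : realType}.
Variables (D c4 k : R) (v : R -> R -> R).
Hypothesis c4_gt0 : 0 < c4.
Hypothesis v_diff : forall x t, 0 <= x <= D ->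
  differentiable (fun z : R * R => v z.1 z.2) (x, t).
Hypothesis v_pde : forall x t, 0 <= x <= D ->
  dt v x t - c4 * dx v x t = - k * v x t.

Lemma dx_transport x t : 0 <= x <= D -> dx v x t = (dt v x t + k * v x t) / c4.
Proof.
move=> xD; apply: (mulIf (lt0r_neq0 c4_gt0)); rewrite divfK ?gt_eqF //.
by have := v_pde t xD; rewrite mulrC; lra.
Qed.

Lemma is_derive_characteristic x t s : 0 <= x - c4 * s <= D ->
  is_derive s 1 (fun s => expR (k * s) * v (x - c4 * s) (t + s)) 0.
Proof.
move=> xsD; have dx1 : is_derive s 1 (fun s => x - c4 * s) (- c4).
  by apply: is_derive_eq; rewrite add0r mul1r [_%:A]mulr1.
have dt1 : is_derive s 1 (fun s => t + s) 1.
  by apply: is_derive_eq; rewrite add0r mulr1.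
have dexp : is_derive s 1 (fun s => expR (k * s)) (expR (k * s) * k).
  by apply: is_derive_eq; rewrite [_%:A]mulr1.
apply: is_derive_eq (is_deriveM dexp (is_derive_along_dxdt dx1 dt1 (v_diff _ xsD))) _.
rewrite /GRing.scale /= (dx_transport _ xsD) mul1r.
by field; rewrite gt_eqF.
Qed.

Lemma causal_dx x : 0 <= x <= D -> causal (v x) -> causal (dx v x).
Proof.
move=> xD v0 th th0; rewrite dx_transport // v0 // mulr0 addr0.
rewrite /dt derive1E (@near_eq_derive _ _ _ _ (cst 0)) ?derive_cst ?mul0r //.
by near=> s; apply: v0; near: s; exact: lt_nbhsl.
Unshelve. all: by end_near.
Qed.

Variables x1 x2 : R.
Hypotheses (x2_ge0 : 0 <= x2) (x2_le_x1 : x2 <= x1) (x1_le_D : x1 <= D).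
Let S := (x1 - x2) / c4.
Let a := expR (- (k * S)).

Lemma transport_delay t : v x2 t = a * v x1 (t - S).
Proof.
have S0 : 0 <= S by rewrite /S divr_ge0 ?subr_ge0 // ltW.
have cS : c4 * S = x1 - x2 by rewrite mulrC divfK ?gt_eqF.
have inD s : 0 <= s <= S -> 0 <= x1 - c4 * s <= D.
  move=> /andP[s0 sS]; apply/andP; split.
    by rewrite subr_ge0 (le_trans (ler_wpM2l (ltW c4_gt0) sS)) // cS gerBl.
  by rewrite lerBlDr (le_trans x1_le_D) // lerDl mulr_ge0 // ltW.
have x1_cS : x1 - c4 * S = x2 by rewrite cS opprB addrC subrK.
have := is_derive0_segment_eq S0 (fun s sS => is_derive_characteristic (t - S) (inD s sS)).
rewrite /= x1_cS subrK !mulr0 subr0 addr0 expR0 mul1r => <-.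
by rewrite /a expRN mulrA mulVf ?mul1r // gt_eqF ?expR_gt0.
Qed.

Lemma transport_dx_delay t : dx v x2 t = a * dx v x1 (t - S).
Proof.
have x1D : 0 <= x1 <= D by apply/andP; split=> //; exact: le_trans x2_le_x1.
have x2D : 0 <= x2 <= D by apply/andP; split=> //; exact: le_trans x1_le_D.
have dshift : is_derive t 1 (fun t => t - S) 1.
  by apply: is_derive_eq; rewrite subr0.
have dt_delay : dt v x2 t = a * dt v x1 (t - S).
  have : is_derive t 1 (fun t => a * v x1 (t - S))
      (a * (0 * dx v x1 (t - S) + 1 * dt v x1 (t - S))) :=
    is_deriveZ a (is_derive_along_dxdt (is_derive_cst x1 t 1) dshift (v_diff _ x1D)).
  rewrite /dt (_ : v x2 = fun t => a * v x1 (t - S)); last first.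
    exact/funext/transport_delay.
  by move=> [_ dv]; rewrite derive1E dv mul0r add0r mul1r.
rewrite !dx_transport // dt_delay transport_delay.
by field; rewrite gt_eqF.
Qed.

End transport_equation.

Theorem theorem2 (R : realType) (D c4 k : R) (v : R -> R -> R) (p : \bar R)
  (x1 x2 : R) :
  0 < D -> 0 < c4 -> 0 < k ->
  (1 <= p)%E ->
  (* classical solution: v differentiable (jointly in (x,t)) on [0,D] x R *)
  (forall x t : R, 0 <= x <= D ->
     differentiable (fun z : R * R => v z.1 z.2) (x, t)) ->
  (* transport PDE  v_t - c4 v_x = - k v  on [0,D] *)
  (forall x t : R, 0 <= x <= D -> dt v x t - c4 * dx v x t = - k * v x t) ->
  (* boundary condition  v_t(D,t) = - k v(D,t),  t >= 0 *)
  (forall t : R, 0 <= t -> dt v D t = - k * v D t) ->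
  0 <= x2 -> x2 < x1 -> x1 <= D ->
  (* input-output setting: zero input before time 0 *)
  (forall th : R, th < 0 -> v x1 th = 0) ->
  in_Lp p (v x1) -> in_Lp p (dx v x1) ->
  ((0 < Lpnorm p (v x1))%E -> (Lpnorm p (v x2) < Lpnorm p (v x1))%E) /\
  ((0 < Lpnorm p (dx v x1))%E -> (Lpnorm p (dx v x2) < Lpnorm p (dx v x1))%E).
Proof.
move=> _ c4_gt0 k_gt0 p_ge1 v_diff v_pde _ x2_ge0 x2_lt_x1 x1_le_D v0 Lv Ldv.
have p_gt0 : (0 < p)%E := lt_le_trans lte01 p_ge1.
have a01 : 0 < expR (- (k * ((x1 - x2) / c4))) < 1.
  by rewrite expR_gt0 expR_lt1 oppr_lt0 mulr_gt0 // divr_gt0 // subr_gt0.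
have x1D : 0 <= x1 <= D by rewrite x1_le_D andbT (le_trans x2_ge0) // ltW.
have delay := transport_delay c4_gt0 v_diff v_pde x2_ge0 (ltW x2_lt_x1) x1_le_D.
have dx_delay := transport_dx_delay c4_gt0 v_diff v_pde x2_ge0 (ltW x2_lt_x1) x1_le_D.
rewrite (funext delay) (funext dx_delay).
split; apply: Lpnorm_scale_delay_lt => //.
exact (causal_dx c4_gt0 v_pde x1D v0).
Qed.
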